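(* Let $\mathfrak d=D(\mathfrak g,\mathfrak h)$ be a double extension (defined in the context), and suppose $\mathfrak h=\hat{\mathfrak h}\dotplus\check{\mathfrak h}$ as a vector space, where $\hat{\mathfrak h}$ is a Lie subalgebra of $\mathfrak h$. Choose bases $\{\hat H_{\hat\alpha}\}$ of $\hat{\mathfrak h}$ and $\{\check H_{\check\alpha}\}$ of $\check{\mathfrak h}$, and write the structure constants of $\mathfrak h$ and of its action on $\mathfrak g$ in this combined basis (so e.g. $f_{\hat\alpha\hat\beta}{}^{\check\gamma}=0$). Let $\{\hat H^{\hat\alpha},\check H^{\check\alpha}\}$ be the dual basis of $\mathfrak h^*$. Define the linear maps $T(\epsilon)$, $0<\epsilon\le 1$, on $\mathfrak d$ by $T(\epsilon)\check H_{\check\alpha}=\epsilon\,\check H_{\check\alpha}$, $T(\epsilon)\check H^{\check\alpha}=\epsilon^{-1}\check H^{\check\alpha}$, and $T(\epsilon)$ equal to the identity on $\mathfrak g$, on $\hat{\mathfrak h}$ and on $\operatorname{span}\{\hat H^{\hat\alpha}\}$. Then the limit $[x,y]_T=\lim_{\epsilon\to0}T(\epsilon)^{-1}[T(\epsilon)x,T(\epsilon)y]$ exists for all $x,y\in\mathfrak d$, and the contracted Lie algebra has the following nonzero brackets: $[G_i,G_j]=f_{ij}{}^kG_k+f_{\hat\alpha i}{}^k\Omega^{\mathfrak g}_{kj}\hat H^{\hat\alpha}$, $[\check H_{\check\alpha},\check H^{\check\beta}]=-f_{\check\alpha\hat\gamma}{}^{\check\beta}\hat H^{\hat\gamma}$,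 $[\hat H_{\hat\alpha},G_i]=f_{\hat\alpha i}{}^jG_j$, $[\hat H_{\hat\alpha},\check H_{\check\beta}]=f_{\hat\alpha\check\beta}{}^{\check\gamma}\check H_{\check\gamma}$, $[\hat H_{\hat\alpha},\check H^{\check\beta}]=-f_{\hat\alpha\check\gamma}{}^{\check\beta}\check H^{\check\gamma}$, $[\hat H_{\hat\alpha},\hat H_{\hat\beta}]=f_{\hat\alpha\hat\beta}{}^{\hat\gamma}\hat H_{\hat\gamma}$, $[\hat H_{\hat\alpha},\hat H^{\hat\beta}]=-f_{\hat\alpha\hat\gamma}{}^{\hat\beta}\hat H^{\hat\gamma}$ (in particular $[\check H_{\check\alpha},G_i]=0$ and $[\check H_{\check\alpha},\check H_{\check\beta}]=0$). Moreover, the symmetric bilinear form with nonzero entries $\langle G_i,G_j\rangle=\Omega^{\mathfrak g}_{ij}$, $\langle \hat H_{\hat\alpha},\hat H_{\hat\beta}\rangle=h_{\hat\alpha\hat\beta}$, $\langle\hat H_{\hat\alpha},\hat H^{\hat\beta}\rangle=\delta_{\hat\alpha}^{\hat\beta}$, $\langle\check H_{\check\alpha},\check H^{\check\beta}\rangle=\delta_{\check\alpha}^{\check\beta}$ (the $\epsilon\to0$ limit of the form $\langle T(\epsilon)x,T(\epsilon)y\rangle$) is an invariant metric on the contracted algebra, and the contracted algebra is a double extension $D(\mathfrak g\oplus D(0,\check{\mathfrak h}_T),\hat{\mathfrak h}_T)$, where $\check{\mathfrak h}_T$ is the abelian Lie algebra on the vector space $\check{\mathfrak h}$.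
   Context: An invariant metric on a real Lie algebra is a symmetric, nondegenerate bilinear form $\langle\cdot,\cdot\rangle$ with $\langle[Z,X],Y\rangle+\langle X,[Z,Y]\rangle=0$ for all $X,Y,Z$. Double extension (Medina–Revoy): let $\mathfrak g$ be a Lie algebra with basis $\{G_i\}$, brackets $[G_i,G_j]=f_{ij}{}^kG_k$ and invariant metric $\Omega^{\mathfrak g}_{ij}$; let $\mathfrak h$ be a Lie algebra with basis $\{H_\alpha\}$, $[H_\alpha,H_\beta]=f_{\alpha\beta}{}^\gamma H_\gamma$, acting on $\mathfrak g$ by derivations $H_\alpha\cdot G_i=f_{\alpha i}{}^jG_j$ that are antisymmetric with respect to $\Omega^{\mathfrak g}$ ($f_{\alpha i}{}^k\Omega^{\mathfrak g}_{kj}+f_{\alpha j}{}^k\Omega^{\mathfrak g}_{ki}=0$). Let $\{H^\alpha\}$ be the dual basis of $\mathfrak h^*$. The double extension $D(\mathfrak g,\mathfrak h)$ is the vector space $\mathfrak g\dotplus\mathfrak h\dotplus\mathfrak h^*$ with brackets $[G_i,G_j]=f_{ij}{}^kG_k+f_{\alpha i}{}^k\Omega^{\mathfrak g}_{kj}H^\alpha$, $[H_\alpha,G_i]=f_{\alpha i}{}^jG_j$, $[H_\alpha,H_\beta]=f_{\alpha\beta}{}^\gamma H_\gamma$, $[H_\alpha,H^\beta]=-f_{\alpha\gamma}{}^\beta H^\gamma$, $[H^\alpha,G_j]=[H^\alpha,H^\beta]=0$, and invariant metric $\langle G_i,G_j\rangle=\Omega^{\mathfrak g}_{ij}$, $\langle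 H_\alpha,H_\beta\rangle=h_{\alpha\beta}$, $\langle H_\alpha,H^\beta\rangle=\delta_\alpha^\beta$, all other entries zero, where $h_{\alpha\beta}$ is any (possibly degenerate) invariant symmetric bilinear form on $\mathfrak h$. $D(0,\mathfrak h)$ denotes the double extension of the trivial Lie algebra, i.e. $\mathfrak h^*\rtimes\mathfrak h$ with the coadjoint action. *)

From HB Require Import structures.
From mathcomp Require Import all_boot all_order all_algebra.
Set Implicit Arguments. Unset Strict Implicit. Unset Printing Implicit Defensive.
Import Order.TTheory GRing.Theory Num.Theory.
Local Open Scope ring_scope.

(* A basis is indexed by a finite type I; c i j k = coefficient of e_k in [e_i,e_j]. *)

Definition br (R : realFieldType) (I : finType) (c : I -> I -> I -> R)
  (x y : I -> R) : I -> R :=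
  fun k => \sum_i \sum_j x i * y j * c i j k.

Definition bilin (R : realFieldType) (I : finType) (B : I -> I -> R)
  (x y : I -> R) : R :=
  \sum_i \sum_j x i * B i j * y j.

Definition lie_consts (R : realFieldType) (I : finType) (c : I -> I -> I -> R) : Prop :=
  (forall i j k, c i j k = - c j i k) /\
  (forall i j l m,
     \sum_k (c i j k * c k l m + c j l k * c k i m + c l i k * c k j m) = 0).

Definition sym_form (R : realFieldType) (I : finType) (B : I -> I -> R) : Prop :=
  forall i j, B i j = B j i.

Definition nondeg (R : realFieldType) (I : finType) (B : I -> I -> R) : Prop :=
  forall x : I -> R, (forall j, \sum_i x i * B i j = 0) -> forall i, x i = 0.

Definition invariant_form (R : realFieldType) (I : finType)
  (c : I -> I -> I -> R) (B : I -> I -> R) : Prop :=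
  forall k i j, \sum_l (c k i l * B l j + c k j l * B i l) = 0.

Definition invariant_metric (R : realFieldType) (I : finType)
  (c : I -> I -> I -> R) (B : I -> I -> R) : Prop :=
  sym_form B /\ nondeg B /\ invariant_form c B.

(* fg, Om : Lie algebra g with invariant metric; fh : Lie algebra h;
   fa a i j : H_a . G_i = sum_j fa a i j G_j, an action of h on g by
   Om-antisymmetric derivations; hf : invariant symmetric (possibly
   degenerate) bilinear form on h. *)
Definition DE_data (R : realFieldType) (Ig Ih : finType)
  (fg : Ig -> Ig -> Ig -> R) (Om : Ig -> Ig -> R)
  (fh : Ih -> Ih -> Ih -> R) (fa : Ih -> Ig -> Ig -> R) (hf : Ih -> Ih -> R) : Prop :=
  lie_consts fg /\ invariant_metric fg Om /\ lie_consts fh /\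
      (forall a i j m, (\sum_k fg i j k * fa a k m)
          = (\sum_k fa a i k * fg k j m) + (\sum_k fa a j k * fg i k m)) /\
      (forall a b i m, (\sum_c fh a b c * fa c i m)
          = (\sum_k fa b i k * fa a k m) - (\sum_k fa a i k * fa b k m)) /\
      (forall a i j, \sum_k (fa a i k * Om k j + fa a j k * Om k i) = 0) /\
      (sym_form hf /\ invariant_form fh hf).

(* Basis of D(g,h) = g + h + h^* :
   inl (inl i) = G_i,  inl (inr a) = H_a,  inr a = H^a. *)
Definition DEidx (Ig Ih : finType) : finType := ((Ig + Ih) + Ih)%type.

Definition dext (R : realFieldType) (Ig Ih : finType)
  (fg : Ig -> Ig -> Ig -> R) (Om : Ig -> Ig -> R)
  (fh : Ih -> Ih -> Ih -> R) (fa : Ih -> Ig -> Ig -> R)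
  (x y z : DEidx Ig Ih) : R :=
  match x, y, z with
  | inl (inl i), inl (inl j), inl (inl k) => fg i j k
  | inl (inl i), inl (inl j), inr a => \sum_k fa a i k * Om k j
  | inl (inr a), inl (inl i), inl (inl j) => fa a i j
  | inl (inl i), inl (inr a), inl (inl j) => - fa a i j
  | inl (inr a), inl (inr b), inl (inr c) => fh a b c
  | inl (inr a), inr b, inr c => - fh a c b
  | inr b, inl (inr a), inr c => fh a c b
  | _, _, _ => 0
  end.

Definition dmetric (R : realFieldType) (Ig Ih : finType)
  (Om : Ig -> Ig -> R) (hf : Ih -> Ih -> R) (x y : DEidx Ig Ih) : R :=
  match x, y with
  | inl (inl i), inl (inl j) => Om i j
  | inl (inr a), inl (inr b) => hf a b
  | inl (inr a), inr b => (a == b)%:R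
  | inr b, inl (inr a) => (a == b)%:R
  | _, _ => 0
  end.

Definition dsum (R : realFieldType) (I1 I2 : finType)
  (c1 : I1 -> I1 -> I1 -> R) (c2 : I2 -> I2 -> I2 -> R)
  (x y z : (I1 + I2)%type) : R :=
  match x, y, z with
  | inl i, inl j, inl k => c1 i j k
  | inr i, inr j, inr k => c2 i j k
  | _, _, _ => 0
  end.

Definition dsum_form (R : realFieldType) (I1 I2 : finType)
  (B1 : I1 -> I1 -> R) (B2 : I2 -> I2 -> R) (x y : (I1 + I2)%type) : R :=
  match x, y with
  | inl i, inl j => B1 i j
  | inr i, inr j => B2 i j
  | _, _ => 0
  end.

(* g has basis G_i, i : 'I_n; h = hat h + check h with combined basis indexed by
   'I_p + 'I_q : inl a = hat H_a, inr a = check H_a. *)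
Definition Hidx (p q : nat) : finType := ('I_p + 'I_q)%type.
Definition Didx (n p q : nat) : finType := DEidx 'I_n (Hidx p q).

Definition Tscale (R : realFieldType) (n p q : nat) (eps : R) (z : Didx n p q) : R :=
  match z with
  | inl (inr (inr _)) => eps
  | inr (inr _) => eps^-1
  | _ => 1
  end.

Definition Tmap (R : realFieldType) (n p q : nat) (eps : R) (x : Didx n p q -> R) :
  Didx n p q -> R := fun z => Tscale eps z * x z.

Definition Tinv (R : realFieldType) (n p q : nat) (eps : R) (x : Didx n p q -> R) :
  Didx n p q -> R := fun z => x z / Tscale eps z.

Definition lim0plus (R : realFieldType) (f : R -> R) (L : R) : Prop :=
  forall e : R, 0 < e -> exists2 d : R, 0 < d &
    forall eps : R, 0 < eps -> eps < d -> `|f eps - L| < e.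

Definition contracted (R : realFieldType) (n p q : nat)
  (fg : 'I_n -> 'I_n -> 'I_n -> R) (Om : 'I_n -> 'I_n -> R)
  (fh : Hidx p q -> Hidx p q -> Hidx p q -> R) (fa : Hidx p q -> 'I_n -> 'I_n -> R)
  (x y z : Didx n p q) : R :=
  match x, y, z with
  | inl (inl i), inl (inl j), inl (inl k) => fg i j k
  | inl (inl i), inl (inl j), inr (inl a) => \sum_k fa (inl a) i k * Om k j
  | inl (inr (inr a)), inr (inr b), inr (inl c) => - fh (inr a) (inl c) (inr b)
  | inr (inr b), inl (inr (inr a)), inr (inl c) => fh (inr a) (inl c) (inr b)
  | inl (inr (inl a)), inl (inl i), inl (inl j) => fa (inl a) i j
  | inl (inl i), inl (inr (inl a)), inl (inl j) => - fa (inl a) i j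
  | inl (inr (inl a)), inl (inr (inr b)), inl (inr (inr c)) => fh (inl a) (inr b) (inr c)
  | inl (inr (inr b)), inl (inr (inl a)), inl (inr (inr c)) => - fh (inl a) (inr b) (inr c)
  | inl (inr (inl a)), inr (inr b), inr (inr c) => - fh (inl a) (inr c) (inr b)
  | inr (inr b), inl (inr (inl a)), inr (inr c) => fh (inl a) (inr c) (inr b)
  | inl (inr (inl a)), inl (inr (inl b)), inl (inr (inl c)) => fh (inl a) (inl b) (inl c)
  | inl (inr (inl a)), inr (inl b), inr (inl c) => - fh (inl a) (inl c) (inl b)
  | inr (inl b), inl (inr (inl a)), inr (inl c) => fh (inl a) (inl c) (inl b)
  | _, _, _ => 0
  end.

Definition contracted_form (R : realFieldType) (n p q : nat)
  (Om : 'I_n -> 'I_n -> R) (hf : Hidx p q -> Hidx p q -> R)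
  (x y : Didx n p q) : R :=
  match x, y with
  | inl (inl i), inl (inl j) => Om i j
  | inl (inr (inl a)), inl (inr (inl b)) => hf (inl a) (inl b)
  | inl (inr (inl a)), inr (inl b) => (a == b)%:R
  | inr (inl b), inl (inr (inl a)) => (a == b)%:R
  | inl (inr (inr a)), inr (inr b) => (a == b)%:R
  | inr (inr b), inl (inr (inr a)) => (a == b)%:R
  | _, _ => 0
  end.

(* g' = g (+) D(0, check h_T), check h_T abelian on 'I_q, D(0,-) with the zero
   form on check h_T (as forced by the contracted metric). *)
Definition gprime_idx (n q : nat) : finType := ('I_n + DEidx void 'I_q)%type.

Definition gprime (R : realFieldType) (n q : nat) (fg : 'I_n -> 'I_n -> 'I_n -> R) :
  gprime_idx n q -> gprime_idx n q -> gprime_idx n q -> R :=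
  dsum fg (dext (fun _ _ _ => 0) (fun _ _ => 0) (fun _ _ _ => 0) (fun _ _ _ => 0)).

Definition gprime_metric (R : realFieldType) (n q : nat) (Om : 'I_n -> 'I_n -> R) :
  gprime_idx n q -> gprime_idx n q -> R :=
  dsum_form Om (dmetric (fun _ _ => 0) (fun _ _ => 0)).

Definition hhat (R : realFieldType) (p q : nat) (fh : Hidx p q -> Hidx p q -> Hidx p q -> R) :
  'I_p -> 'I_p -> 'I_p -> R := fun a b c => fh (inl a) (inl b) (inl c).

From HB Require Import structures.
From mathcomp Require Import all_boot all_order all_algebra.
From mathcomp.algebra_tactics Require Import ring lra.
Set Implicit Arguments. Unset Strict Implicit. Unset Printing Implicit Defensive.
Import Order.TTheory GRing.Theory Num.Theory.
Local Open Scope ring_scope.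

(* Under T(eps) the structure constant c_{uv}^w of D(g, h) is multiplied by
   eps^(w(u) + w(v) - w(w)), where check H_a has weight 1, check H^a weight -1
   and all other basis vectors weight 0.  The only constants with negative
   exponent are of the form f_{hat hat}^{check}, which vanish since hat h is a
   subalgebra; so the limit exists and keeps exactly the constants of weight 0.
   After relabelling the basis these are the constants of the double extension
   of g (+) D(0, check h) by hat h, acting on check h = h / hat h and its dual,
   and double extensions are Lie algebras with invariant metrics. *)

Section SumLemmas.
Variables (R : pzRingType) (I : finType).
Implicit Types (F G : I -> R) (a : I).

Lemma sum_mul0l F : \sum_i 0 * F i = 0.
Proof. by rewrite big1 // => i _; rewrite mul0r. Qed.

Lemma sum_mul0r F : \sum_i F i * 0 = 0.
Proof. by rewrite big1 // => i _; rewrite mulr0. Qed.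

Lemma sum_mulNl F G : \sum_i - F i * G i = - \sum_i F i * G i.
Proof. by rewrite -sumrN; apply: eq_bigr => i _; rewrite mulNr. Qed.

Lemma sum_mulNr F G : \sum_i F i * - G i = - \sum_i F i * G i.
Proof. by rewrite -sumrN; apply: eq_bigr => i _; rewrite mulrN. Qed.

Lemma sum_mul_deltar a F : \sum_b F b * (b == a)%:R = F a.
Proof.
rewrite (bigD1 a) //= eqxx mulr1 big1 ?addr0 // => b /negbTE ->.
by rewrite mulr0.
Qed.

Lemma sum_mul_deltar' a F : \sum_b F b * (a == b)%:R = F a.
Proof. by under eq_bigr do rewrite eq_sym; exact: sum_mul_deltar. Qed.

Lemma sum_deltal_mul a F : \sum_b (b == a)%:R * F b = F a.
Proof.
rewrite (bigD1 a) //= eqxx mul1r big1 ?addr0 // => b /negbTE ->.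
by rewrite mul0r.
Qed.

Lemma sum_deltal_mul' a F : \sum_b (a == b)%:R * F b = F a.
Proof. by under eq_bigr do rewrite eq_sym; exact: sum_deltal_mul. Qed.

End SumLemmas.

Lemma sum_void (R : pzRingType) (F : void -> R) : \sum_i F i = 0.
Proof. by rewrite big1 // => -[]. Qed.

Ltac expand_sums :=
  do 2 rewrite ?big_sumType /= ?big_split /= ?sum_mul0l ?sum_mul0r ?big1_eq
    ?sum_mulNl ?sum_mulNr ?sum_mul_deltar ?sum_mul_deltar' ?sum_deltal_mul
    ?sum_deltal_mul' ?sum_void ?mul0r ?mulr0 ?addr0 ?add0r ?oppr0 ?subr0 ?sub0r.

Section BilinearSums.
Variables (R : comPzRingType) (I J : finType).

Lemma sum_mul_antisym (f : I -> I -> J -> R) (F : I -> R) x y :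
  (forall a b c, f a b c = - f b a c) ->
  \sum_k F k * f k x y = - \sum_k F k * f x k y.
Proof. by move=> fA; rewrite -sumrN; apply: eq_bigr => k _; rewrite fA mulrN. Qed.

Lemma sum_mulC (F G : I -> R) : \sum_k F k * G k = \sum_k G k * F k.
Proof. by apply: eq_bigr => k _; rewrite mulrC. Qed.

Lemma sum_mul_sym (B : I -> I -> R) (F : I -> R) i :
  (forall a b, B a b = B b a) -> \sum_m F m * B i m = \sum_m F m * B m i.
Proof. by move=> Bs; apply: eq_bigr => m _; rewrite Bs. Qed.

Lemma sum_mul_sumA (A : I -> R) (B : I -> J -> R) (C : J -> R) :
  \sum_m (\sum_k A k * B k m) * C m = \sum_k A k * (\sum_m B k m * C m).
Proof.
under eq_bigr => m _ do rewrite big_distrl.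
rewrite exchange_big; apply: eq_bigr => k _; rewrite big_distrr.
by apply: eq_bigr => m _ /=; rewrite mulrA.
Qed.

Lemma sum_mul_sum_exchange (F : I -> J -> R) (G : J -> R) (B : I -> R) :
  \sum_c (\sum_k F c k * G k) * B c = \sum_k (\sum_c B c * F c k) * G k.
Proof.
under eq_bigr => c _ do rewrite big_distrl.
rewrite exchange_big; apply: eq_bigr => k _; rewrite big_distrl.
by apply: eq_bigr => c _ /=; ring.
Qed.

Lemma sum_mul_sum_sym (B : I -> I -> R) (X Y : I -> R) :
  (forall i j, B i j = B j i) ->
  \sum_k X k * (\sum_m Y m * B m k) = \sum_k Y k * (\sum_m X m * B m k).
Proof.
move=> Bs; under eq_bigr => k _ do rewrite big_distrr.
under [RHS]eq_bigr => k _ do rewrite big_distrr.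
rewrite [RHS]exchange_big; apply: eq_bigr => k _; apply: eq_bigr => m _ /=.
by rewrite Bs; ring.
Qed.

End BilinearSums.

Section DoubleExtension.
Variables (R : realFieldType) (Ig Ih : finType).
Variables (fg : Ig -> Ig -> Ig -> R) (Om : Ig -> Ig -> R).
Variables (fh : Ih -> Ih -> Ih -> R) (fa : Ih -> Ig -> Ig -> R) (hf : Ih -> Ih -> R).
Hypothesis fgA : forall i j k, fg i j k = - fg j i k.
Hypothesis fgJ : forall i j l m,
  \sum_k (fg i j k * fg k l m + fg j l k * fg k i m + fg l i k * fg k j m) = 0.
Hypothesis fhA : forall a b c, fh a b c = - fh b a c.
Hypothesis fhJ : forall a b c d,
  \sum_k (fh a b k * fh k c d + fh b c k * fh k a d + fh c a k * fh k b d) = 0.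
Hypothesis Os : forall i j, Om i j = Om j i.
Hypothesis Oinv : forall k i j, \sum_l (fg k i l * Om l j + fg k j l * Om i l) = 0.
Hypothesis fa_der : forall a i j m, \sum_k fg i j k * fa a k m
  = \sum_k fa a i k * fg k j m + \sum_k fa a j k * fg i k m.
Hypothesis fa_rep : forall a b i m, \sum_c fh a b c * fa c i m
  = \sum_k fa b i k * fa a k m - \sum_k fa a i k * fa b k m.
Hypothesis fa_skew : forall a i j, \sum_k (fa a i k * Om k j + fa a j k * Om k i) = 0.

Let Phi i j l := \sum_m fg i j m * Om m l.

Lemma action_form_skew a i j :
  \sum_k fa a i k * Om k j = - \sum_k fa a j k * Om k i.
Proof. by apply/eqP; rewrite -addr_eq0 -big_split /= fa_skew. Qed.

Lemma Phi_cycle i j l : Phi i j l = Phi l i j.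
Proof.
rewrite /Phi; have /eqP := Oinv i j l; rewrite big_split /= addr_eq0 => /eqP ->.
rewrite -sumrN; apply: eq_bigr => m _; by rewrite fgA Os mulNr opprK.
Qed.

Lemma cocycle_derivation d i j l : \sum_k fg i j k * (\sum_m fa d k m * Om m l)
  = \sum_k fa d i k * Phi k j l + \sum_k fa d j k * Phi i k l.
Proof.
rewrite -sum_mul_sumA.
under eq_bigr => m _ do rewrite fa_der mulrDl.
by rewrite big_split /= !sum_mul_sumA.
Qed.

Lemma cocycle_skew d i j l : \sum_k fa d i k * Phi k j l
  = - \sum_m fg j l m * (\sum_k fa d m k * Om k i).
Proof.
under eq_bigr => k _ do rewrite Phi_cycle Phi_cycle /Phi big_distrr.
rewrite exchange_big -sumrN; apply: eq_bigr => m _ /=.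
rewrite -mulrN -action_form_skew big_distrr; apply: eq_bigr => k _ /=.
by rewrite Os; ring.
Qed.

(* The skew derivation [fa d] of g gives the 2-cocycle <fa d G_i, G_j>. *)
Lemma action_form_cocycle d i j l :
  \sum_k fg i j k * (\sum_m fa d k m * Om m l) +
  \sum_k fg j l k * (\sum_m fa d k m * Om m i) +
  \sum_k fg l i k * (\sum_m fa d k m * Om m j) = 0.
Proof.
suff -> : \sum_k fg i j k * (\sum_m fa d k m * Om m l) =
  - \sum_k fg j l k * (\sum_m fa d k m * Om m i)
  - \sum_k fg l i k * (\sum_m fa d k m * Om m j) by lra.
rewrite cocycle_derivation cocycle_skew.
have -> : \sum_k fa d j k * Phi i k l = \sum_k fa d j k * Phi k l i.
  by apply: eq_bigr => k _; rewrite [Phi k l i]Phi_cycle.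
by rewrite cocycle_skew.
Qed.

(* ... and this cocycle depends h-equivariantly on [d]. *)
Lemma action_form_equivariant a b i j :
  \sum_c (\sum_k fa c i k * Om k j) * fh b a c
  - \sum_k fa b j k * (\sum_m fa a k m * Om m i)
  + \sum_k fa b i k * (\sum_m fa a k m * Om m j) = 0.
Proof.
rewrite sum_mul_sum_exchange.
under eq_bigr => k _ do rewrite fa_rep mulrBl.
rewrite sumrB !sum_mul_sumA.
suff -> : \sum_k fa a i k * (\sum_m fa b k m * Om m j)
        = \sum_k fa b j k * (\sum_m fa a k m * Om m i) by lra.
under eq_bigr => k _ do rewrite action_form_skew mulrN.
under [RHS]eq_bigr => k _ do rewrite action_form_skew mulrN.
by rewrite !sumrN sum_mul_sum_sym.
Qed.

(* The Jacobi identity of h, rearranged for the coadjoint action on h^*. *)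
Lemma coadjoint_jacobi a b c d :
  - \sum_k fh a b k * fh k d c - \sum_k fh b k c * fh a d k
  + \sum_k fh a k c * fh b d k = 0.
Proof.
have := fhJ a b d c; rewrite !big_split /=.
have -> : \sum_k fh b d k * fh k a c = - \sum_k fh a k c * fh b d k.
  by rewrite -sumrN; apply: eq_bigr => k _; rewrite (fhA k a c); ring.
have -> : \sum_k fh d a k * fh k b c = \sum_k fh b k c * fh a d k.
  by apply: eq_bigr => k _; rewrite (fhA d a k) (fhA k b c); ring.
lra.
Qed.

Lemma dext_antisym u v w : dext fg Om fh fa u v w = - dext fg Om fh fa v u w.
Proof.
case: u v w => [[i|a]|a] [[j|b]|b] [[k|c]|c] /=; rewrite ?oppr0 ?opprK //.
exact: action_form_skew.
Qed.

Lemma dext_jacobi u v w z :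
  \sum_k (dext fg Om fh fa u v k * dext fg Om fh fa k w z +
          dext fg Om fh fa v w k * dext fg Om fh fa k u z +
          dext fg Om fh fa w u k * dext fg Om fh fa k v z) = 0.
Proof.
case: u v w z => [[i|a]|a] [[j|b]|b] [[l|c]|c] [[m|d]|d]; expand_sums => //.
- by have := fgJ i j l m; rewrite !big_split.
- exact: action_form_cocycle.
- have := fa_der c i j m; have := sum_mul_antisym (fa c j) i m fgA; lra.
- have := action_form_equivariant d c i j; lra.
- have := fa_der b l i m; have := sum_mul_antisym (fa b i) l m fgA; lra.
- have := action_form_equivariant d b l i; lra.
- have := fa_rep b c i m; lra.
- have := fa_der a j l m; have := sum_mul_antisym (fa a l) j m fgA; lra.
- have := action_form_equivariant d a j l; lra.
- have := fa_rep c a j m; lra.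
- have := fa_rep a b l m; lra.
- by have := fhJ a b c d; rewrite !big_split.
- have := coadjoint_jacobi a b c d; lra.
- have := coadjoint_jacobi c a b d; lra.
- have := coadjoint_jacobi b c a d; lra.
Qed.

Hypothesis hf_inv : invariant_form fh hf.

Lemma dext_invariant : invariant_form (dext fg Om fh fa) (dmetric Om hf).
Proof.
case=> [[k|c]|c] [[i|a]|a] [[j|b]|b]; expand_sums => //.
- by have := Oinv k i j; rewrite big_split.
- by rewrite (sum_mul_sym _ _ Os) addNr.
- by rewrite addNr.
- by have := fa_skew c i j; rewrite big_split /= (sum_mul_sym _ _ Os).
- by have := hf_inv c a b; rewrite big_split.
- by rewrite subrr.
- by rewrite subrr.
- by rewrite fhA addNr.
Qed.

End DoubleExtension.

Lemma dmetric_sym (R : realFieldType) (Ig Ih : finType)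
    (Om : Ig -> Ig -> R) (hf : Ih -> Ih -> R) :
  sym_form Om -> sym_form hf -> sym_form (dmetric Om hf).
Proof. by move=> Os hs [[i|a]|a] [[j|b]|b] //=; rewrite ?Os ?hs // eq_sym. Qed.

(* The pairing of h with h^* makes the form nondegenerate whatever [hf] is. *)
Lemma dmetric_nondeg (R : realFieldType) (Ig Ih : finType)
    (Om : Ig -> Ig -> R) (hf : Ih -> Ih -> R) :
  nondeg Om -> nondeg (dmetric Om hf).
Proof.
move=> Ond x Hx.
have xH b : x (inl (inr b)) = 0 by have := Hx (inr b); expand_sums.
have xHdual b : x (inr b) = 0.
  have := Hx (inl (inr b)); expand_sums.
  by rewrite big1 ?add0r // => a _; rewrite xH mul0r.
have xG : forall i, x (inl (inl i)) = 0.
  by apply: Ond => j; have := Hx (inl (inl j)); expand_sums.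
by case=> [[i|a]|a].
Qed.

Lemma DE_data_lie (R : realFieldType) (Ig Ih : finType) fg Om fh fa hf :
  @DE_data R Ig Ih fg Om fh fa hf -> lie_consts (dext fg Om fh fa).
Proof.
move=> [[fgA fgJ] [[Os [_ Oinv]] [[fhA fhJ] [Der [Rep [faO _]]]]]].
split; [exact: dext_antisym | exact: dext_jacobi].
Qed.

Lemma DE_data_invariant_metric (R : realFieldType) (Ig Ih : finType) fg Om fh fa hf :
  @DE_data R Ig Ih fg Om fh fa hf ->
  invariant_metric (dext fg Om fh fa) (dmetric Om hf).
Proof.
move=> [[fgA _] [[Os [Ond Oinv]] [[fhA _] [_ [_ [faO [hs hinv]]]]]]].
split; first exact: dmetric_sym.
split; first exact: dmetric_nondeg.
exact: dext_invariant.
Qed.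

Section DirectSum.
Variables (R : realFieldType) (I1 I2 : finType).
Variables (c1 : I1 -> I1 -> I1 -> R) (c2 : I2 -> I2 -> I2 -> R).

Lemma dsum_lie : lie_consts c1 -> lie_consts c2 -> lie_consts (dsum c1 c2).
Proof.
move=> [A1 J1] [A2 J2]; split; first by move=> [i|i] [j|j] [k|k] /=; rewrite ?oppr0.
move=> [i|i] [j|j] [l|l] [m|m]; expand_sums => //.
- by have := J1 i j l m; rewrite !big_split.
- by have := J2 i j l m; rewrite !big_split.
Qed.

Lemma dsum_invariant_metric B1 B2 :
  invariant_metric c1 B1 -> invariant_metric c2 B2 ->
  invariant_metric (dsum c1 c2) (dsum_form B1 B2).
Proof.
move=> [S1 [N1 I1']] [S2 [N2 I2']]; split; [|split].
- by move=> [i|i] [j|j] /=.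
- move=> x Hx.
  have x1 : forall i, x (inl i) = 0 by apply: N1 => j; have := Hx (inl j); expand_sums.
  have x2 : forall i, x (inr i) = 0 by apply: N2 => j; have := Hx (inr j); expand_sums.
  by case.
- move=> [k|k] [i|i] [j|j]; expand_sums => //.
  + by have := I1' k i j; rewrite big_split.
  + by have := I2' k i j; rewrite big_split.
Qed.

End DirectSum.

Section AbelianDoubleExtension.
Variables (R : realFieldType) (Ig Ih : finType).

Local Notation dext0 := (dext (fun _ _ _ => 0 : R) (fun _ _ => 0)
  (fun _ _ _ => 0) (fun _ _ _ => 0) : DEidx Ig Ih -> _).

Lemma dext0E u v w : dext0 u v w = 0.
Proof. by case: u => [[u|u]|u]; case: v => [[v|v]|v]; case: w => [[w|w]|w]; expand_sums. Qed.

Lemma dext0_lie : lie_consts dext0.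
Proof.
split=> *; first by rewrite !dext0E oppr0.
by apply: big1 => k _; rewrite !dext0E !mul0r !addr0.
Qed.

End AbelianDoubleExtension.

Lemma dext0_invariant_metric (R : realFieldType) (Ih : finType) :
  invariant_metric
    (dext (fun _ _ _ => 0 : R) (fun _ _ => 0) (fun _ _ _ => 0) (fun _ _ _ => 0)
      : DEidx void Ih -> _)
    (dmetric (fun _ _ => 0) (fun _ _ => 0)).
Proof.
split; first exact: dmetric_sym.
split; first by apply: dmetric_nondeg => x _ [].
by move=> *; apply: big1 => k _; rewrite !dext0E !mul0r !addr0.
Qed.

Lemma gprime_lie (R : realFieldType) n q (fg : 'I_n -> 'I_n -> 'I_n -> R) :
  lie_consts fg -> lie_consts (@gprime R n q fg).
Proof. by move=> H; apply: dsum_lie => //; exact: dext0_lie. Qed.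

Lemma gprime_invariant_metric (R : realFieldType) n q (fg : 'I_n -> 'I_n -> 'I_n -> R) Om :
  invariant_metric fg Om -> invariant_metric (@gprime R n q fg) (@gprime_metric R n q Om).
Proof. by move=> H; apply: dsum_invariant_metric => //; exact: dext0_invariant_metric. Qed.

Section HatSubalgebra.
Variables (R : realFieldType) (p q : nat) (fh : Hidx p q -> Hidx p q -> Hidx p q -> R).
Hypothesis fhA : forall a b c, fh a b c = - fh b a c.
Hypothesis fhJ : forall a b c d,
  \sum_k (fh a b k * fh k c d + fh b c k * fh k a d + fh c a k * fh k b d) = 0.
Hypothesis hat_sub : forall a b c, fh (inl a) (inl b) (inr c) = 0.

Lemma hat_subalgebra_lie : lie_consts (hhat fh).
Proof.
split=> [a b c|a b c d]; first by rewrite /hhat fhA.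
have := fhJ (inl a) (inl b) (inl c) (inl d).
rewrite big_sumType /= [X in _ + X]big1 ?addr0 // => k _.
by rewrite !hat_sub !mul0r !addr0.
Qed.

(* Because hat h is a subalgebra, h / hat h, with basis the check H_a, is a
   representation of hat h. *)
Lemma check_quotient_rep a b c d :
  \sum_e fh (inl a) (inl b) (inl e) * fh (inl e) (inr c) (inr d) =
  \sum_e fh (inl b) (inr c) (inr e) * fh (inl a) (inr e) (inr d) -
  \sum_e fh (inl a) (inr c) (inr e) * fh (inl b) (inr e) (inr d).
Proof.
have vanish_p e f (F : 'I_p -> R) : \sum_k F k * fh (inl k) (inl e) (inr f) = 0.
  by apply: big1 => k _; rewrite hat_sub mulr0.
have vanish_q e f (F : 'I_q -> R) : \sum_k fh (inl e) (inl f) (inr k) * F k = 0.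
  by apply: big1 => k _; rewrite hat_sub mul0r.
have := fhJ (inl a) (inl b) (inr c) (inr d); expand_sums; rewrite !vanish_p vanish_q.
have -> : \sum_e fh (inl b) (inr c) (inr e) * fh (inr e) (inl a) (inr d) =
   - \sum_e fh (inl b) (inr c) (inr e) * fh (inl a) (inr e) (inr d).
  by rewrite -sumrN; apply: eq_bigr => e _; rewrite (fhA (inr e)) mulrN.
have -> : \sum_e fh (inr c) (inl a) (inr e) * fh (inr e) (inl b) (inr d) =
   \sum_e fh (inl a) (inr c) (inr e) * fh (inl b) (inr e) (inr d).
  by apply: eq_bigr => e _; rewrite (fhA (inr c)) (fhA (inr e)) mulrNN.
lra.
Qed.

End HatSubalgebra.

Section HatAction.
Variables (R : realFieldType) (n p q : nat).
Variables (fg : 'I_n -> 'I_n -> 'I_n -> R) (Om : 'I_n -> 'I_n -> R).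
Variables (fh : Hidx p q -> Hidx p q -> Hidx p q -> R).
Variables (fa : Hidx p q -> 'I_n -> 'I_n -> R) (hf : Hidx p q -> Hidx p q -> R).

(* In g (+) D(0, check h), [inl i] is G_i, [inr (inl (inr b))] is check H_b
   and [inr (inr b)] is check H^b: hat h acts on g, on check h = h / hat h and,
   coadjointly, on its dual. *)
Definition hat_action (a : 'I_p) (u v : gprime_idx n q) : R :=
  match u, v with
  | inl i, inl j => fa (inl a) i j
  | inr (inl (inr b)), inr (inl (inr c)) => fh (inl a) (inr b) (inr c)
  | inr (inr b), inr (inr c) => - fh (inl a) (inr c) (inr b)
  | _, _ => 0
  end.

Definition hat_form (a b : 'I_p) : R := hf (inl a) (inl b).

Lemma hat_action_derivation
    (fa_der : forall a i j m, \sum_k fg i j k * fa a k m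
       = \sum_k fa a i k * fg k j m + \sum_k fa a j k * fg i k m) a u v w :
  \sum_k gprime fg u v k * hat_action a k w
  = \sum_k hat_action a u k * gprime fg k v w + \sum_k hat_action a v k * gprime fg u k w.
Proof.
case: u v w => [i|[[[]|b]|b]] [j|[[[]|b']|b']] [m|[[[]|c]|c]];
  rewrite /gprime /=; expand_sums => //; lra.
Qed.

Lemma hat_action_rep (fhA : forall a b c, fh a b c = - fh b a c)
    (fhJ : forall a b c d,
       \sum_k (fh a b k * fh k c d + fh b c k * fh k a d + fh c a k * fh k b d) = 0)
    (fa_rep : forall a b i m, \sum_c fh a b c * fa c i m
       = \sum_k fa b i k * fa a k m - \sum_k fa a i k * fa b k m)
    (hat_sub : forall a b c, fh (inl a) (inl b) (inr c) = 0) a b u w :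
  \sum_c hhat fh a b c * hat_action c u w
  = \sum_k hat_action b u k * hat_action a k w - \sum_k hat_action a u k * hat_action b k w.
Proof.
case: u w => [i|[[[]|c]|c]] [m|[[[]|d]|d]]; rewrite /hhat /=; expand_sums => //.
- have := fa_rep (inl a) (inl b) i m; rewrite big_sumType /=.
  rewrite [X in _ + X = _ -> _]big1 ?addr0 // => k _.
  by rewrite hat_sub mul0r.
- exact: check_quotient_rep.
- have := check_quotient_rep fhA fhJ hat_sub a b d c.
  rewrite (sum_mulC (fun e => fh (inl b) (inr e) (inr c))).
  rewrite (sum_mulC (fun e => fh (inl a) (inr e) (inr c))); lra.
Qed.

Lemma hat_action_skew
    (fa_skew : forall a i j, \sum_k (fa a i k * Om k j + fa a j k * Om k i) = 0) a u v :
  \sum_k (hat_action a u k * gprime_metric Om k v + hat_action a v k * gprime_metric Om k u) = 0.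
Proof.
case: u v => [i|[[[]|c]|c]] [j|[[[]|d]|d]]; rewrite /gprime_metric /=; expand_sums;
  try lra.
by have := fa_skew (inl a) i j; rewrite big_split.
Qed.

Lemma hat_DE_data : DE_data fg Om fh fa hf ->
  (forall a b c, fh (inl a) (inl b) (inr c) = 0) ->
  DE_data (gprime fg) (gprime_metric Om) (hhat fh) hat_action hat_form.
Proof.
move=> [fgL [OmM [[fhA fhJ] [Der [Rep [faO [hs hinv]]]]]]] hat_sub.
split; first exact: gprime_lie.
split; first exact: gprime_invariant_metric.
split; first exact: hat_subalgebra_lie.
split; first exact: hat_action_derivation.
split; first exact: hat_action_rep.
split; first exact: hat_action_skew.
split=> [a b|k i j]; first by rewrite /hat_form hs.
have := hinv (inl k) (inl i) (inl j); rewrite /hhat /hat_form big_sumType /=.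
by rewrite [X in _ + X]big1 ?addr0 // => l _; rewrite !hat_sub !mul0r !addr0.
Qed.

End HatAction.

Section Transport.
Variables (R : realFieldType) (I J : finType) (s : J -> I).
Variables (c : I -> I -> I -> R) (c' : J -> J -> J -> R).
Hypothesis s_bij : bijective s.
Hypothesis s_bracket : forall u v w, c (s u) (s v) (s w) = c' u v w.

Lemma lie_consts_transport : lie_consts c' -> lie_consts c.
Proof.
have [t st ts] := s_bij; move=> [A Jc]; split.
  by move=> i j k; rewrite -(ts i) -(ts j) -(ts k) !s_bracket A.
move=> i j l m; rewrite (reindex s); last by exists t => x _.
rewrite -(ts i) -(ts j) -(ts l) -(ts m) -[RHS](Jc (t i) (t j) (t l) (t m)).
by apply: eq_bigr => k _; rewrite !s_bracket.
Qed.

Lemma invariant_metric_transport B B' :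
  (forall u v, B (s u) (s v) = B' u v) ->
  invariant_metric c' B' -> invariant_metric c B.
Proof.
have [t st ts] := s_bij; move=> sB [S [N I']]; split; [|split].
- by move=> i j; rewrite -(ts i) -(ts j) !sB S.
- move=> x Hx i; rewrite -(ts i); apply: (N (fun u => x (s u))) => j.
  rewrite -[RHS](Hx (s j)) (reindex s); last by exists t => y _.
  by apply: eq_bigr => k _; rewrite sB.
- move=> k i j; rewrite (reindex s); last by exists t => y _.
  rewrite -(ts i) -(ts j) -(ts k) -[RHS](I' (t k) (t i) (t j)).
  by apply: eq_bigr => l _; rewrite !s_bracket !sB.
Qed.

End Transport.

Definition contraction_iso (n p q : nat) (u : DEidx (gprime_idx n q) 'I_p) :
    Didx n p q :=
  match u with
  | inl (inl (inl i)) => inl (inl i)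
  | inl (inl (inr (inl (inl v)))) => match v with end
  | inl (inl (inr (inl (inr b)))) => inl (inr (inr b))
  | inl (inl (inr (inr b))) => inr (inr b)
  | inl (inr a) => inl (inr (inl a))
  | inr a => inr (inl a)
  end.

Definition contraction_iso_inv (n p q : nat) (z : Didx n p q) :
    DEidx (gprime_idx n q) 'I_p :=
  match z with
  | inl (inl i) => inl (inl (inl i))
  | inl (inr (inr b)) => inl (inl (inr (inl (inr b))))
  | inr (inr b) => inl (inl (inr (inr b)))
  | inl (inr (inl a)) => inl (inr a)
  | inr (inl a) => inr a
  end.

Lemma contraction_iso_bij n p q : bijective (@contraction_iso n p q).
Proof.
exists (@contraction_iso_inv n p q); first by move=> [[[i|[[[]|b]|b]]|a]|a].
by move=> [[i|[a|b]]|[a|b]].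
Qed.

Lemma contraction_iso_bracket (R : realFieldType) (n p q : nat)
    (fg : 'I_n -> 'I_n -> 'I_n -> R) (Om : 'I_n -> 'I_n -> R)
    (fh : Hidx p q -> Hidx p q -> Hidx p q -> R) (fa : Hidx p q -> 'I_n -> 'I_n -> R) :
  (forall a b c, fh a b c = - fh b a c) -> forall u v w,
  contracted fg Om fh fa (contraction_iso u) (contraction_iso v) (contraction_iso w)
  = dext (gprime fg) (gprime_metric Om) (hhat fh) (hat_action fh fa) u v w.
Proof.
move=> fhA.
case=> [[[i|[[[]|b]|b]]|a]|a] [[[j|[[[]|b']|b']]|a']|a'] [[[k|[[[]|c]|c]]|c']|c'];
  rewrite /gprime /gprime_metric /hhat /=; expand_sums => //; lra.
Qed.

Lemma contraction_iso_form (R : realFieldType) (n p q : nat)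
    (Om : 'I_n -> 'I_n -> R) (hf : Hidx p q -> Hidx p q -> R) u v :
  contracted_form Om hf (contraction_iso u) (contraction_iso v)
  = dmetric (gprime_metric Om) (hat_form hf) u v.
Proof. by case: u v => [[[i|[[[]|b]|b]]|a]|a] [[[j|[[[]|b']|b']]|a']|a']. Qed.

Section Limits.
Variable R : realFieldType.
Implicit Types (f g : R -> R) (L M : R).

Lemma lim0plus_const L : lim0plus (fun _ => L) L.
Proof. by move=> e e0; exists 1 => // eps _ _; rewrite subrr normr0. Qed.

Lemma lim0plus_ext f g L :
  lim0plus f L -> (forall e, 0 < e -> f e = g e) -> lim0plus g L.
Proof.
move=> Hf fg e e0; have [d d0 H] := Hf e e0.
by exists d => // eps ep epd; rewrite -fg // H.
Qed.

Lemma lim0plus_add f g L M :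
  lim0plus f L -> lim0plus g M -> lim0plus (fun e => f e + g e) (L + M).
Proof.
move=> Hf Hg e e0; have e2 : 0 < e / 2 by rewrite divr_gt0.
have [d1 d10 H1] := Hf _ e2; have [d2 d20 H2] := Hg _ e2.
exists (Num.min d1 d2); first by rewrite lt_min d10 d20.
move=> eps ep; rewrite lt_min => /andP [h1 h2].
rewrite (_ : f eps + g eps - (L + M) = (f eps - L) + (g eps - M)); last by ring.
rewrite (splitr e); apply: le_lt_trans (ler_normD _ _) _.
by rewrite ltrD ?H1 ?H2.
Qed.

Lemma lim0plus_sum (I : finType) (F : I -> R -> R) (L : I -> R) :
  (forall i, lim0plus (F i) (L i)) -> lim0plus (fun e => \sum_i F i e) (\sum_i L i).
Proof.
move=> HF; rewrite unlock; elim: (index_enum I) => [|i r IH] /=.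
  exact: lim0plus_const.
exact: lim0plus_add.
Qed.

Lemma lim0plus_scale a f L : lim0plus f L -> lim0plus (fun e => a * f e) (a * L).
Proof.
move=> Hf e e0; have a1 : 0 < `|a| + 1 by rewrite ltr_wpDl.
have [d d0 H] := Hf (e / (`|a| + 1)) (divr_gt0 e0 a1).
exists d => // eps ep epd; rewrite -mulrBr normrM.
apply: le_lt_trans (_ : (`|a| + 1) * `|f eps - L| < e).
  by rewrite ler_wpM2r ?lerDl.
by rewrite mulrC -ltr_pdivlMr // H.
Qed.

Lemma lim0plus_expS k : lim0plus (fun e : R => e ^+ k.+1) 0.
Proof.
move=> e e0; exists (Num.min 1 e); first by rewrite lt_min ltr01.
move=> eps ep; rewrite lt_min => /andP [eps1 epse].
rewrite subr0 ger0_norm ?exprn_ge0 ?ltW // exprSr.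
apply: le_lt_trans epse; apply: ler_piMl; first exact: ltW.
exact: exprn_ile1 (ltW ep) (ltW eps1).
Qed.

Lemma lim0plus_monomial (D C : R) (S : R -> R) k :
  (forall e, 0 < e -> S e = e ^+ k) -> (if k is 0 then D = C else C = 0) ->
  lim0plus (fun e => D * S e) C.
Proof.
case: k => [|k] HS ->.
  by apply: lim0plus_ext (lim0plus_const C) _ => e e0; rewrite HS // expr0 mulr1.
have := lim0plus_scale D (lim0plus_expS k); rewrite mulr0 => /lim0plus_ext; apply.
by move=> e e0; rewrite HS.
Qed.

Lemma lim0plus_zero (D C : R) (S : R -> R) :
  D = 0 -> C = 0 -> lim0plus (fun e => D * S e) C.
Proof. by move=> -> ->; apply: lim0plus_ext (lim0plus_const 0) _ => e _; rewrite mul0r. Qed.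

End Limits.

Section Contraction.
Variables (R : realFieldType) (n p q : nat).
Variables (fg : 'I_n -> 'I_n -> 'I_n -> R) (Om : 'I_n -> 'I_n -> R).
Variables (fh : Hidx p q -> Hidx p q -> Hidx p q -> R).
Variables (fa : Hidx p q -> 'I_n -> 'I_n -> R) (hf : Hidx p q -> Hidx p q -> R).
Hypothesis fhA : forall a b c, fh a b c = - fh b a c.
Hypothesis hat_sub : forall a b c, fh (inl a) (inl b) (inr c) = 0.

Ltac scaling_monomial k :=
  apply: (@lim0plus_monomial _ _ _ _ k) => /=;
  [ move=> e e0; (have ? : e != 0 by rewrite gt_eqF); field; done
  | first [ done | by rewrite fhA ] ].

Lemma dext_scaled_limit (u v w : Didx n p q) :
  lim0plus (fun eps => dext fg Om fh fa u v w * (Tscale eps u * Tscale eps v / Tscale eps w))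
           (contracted fg Om fh fa u v w).
Proof.
case: u v w => [[i|[a|a]]|[a|a]] [[j|[b|b]]|[b|b]] [[k|[c|c]]|[c|c]];
  first [ solve [apply: lim0plus_zero; rewrite /= ?hat_sub ?oppr0 //]
        | solve [scaling_monomial 0%N] | solve [scaling_monomial 1%N]
        | solve [scaling_monomial 2%N] ].
Qed.

Lemma dmetric_scaled_limit (u v : Didx n p q) :
  lim0plus (fun eps => dmetric Om hf u v * (Tscale eps u * Tscale eps v))
           (contracted_form Om hf u v).
Proof.
case: u v => [[i|[a|a]]|[a|a]] [[j|[b|b]]|[b|b]];
  first [ solve [apply: lim0plus_zero => //=] | solve [scaling_monomial 0%N]
        | solve [scaling_monomial 1%N] | solve [scaling_monomial 2%N] ].
Qed.

Lemma contraction_bracket_limit (x y : Didx n p q -> R) (z : Didx n p q) :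
  lim0plus (fun eps => Tinv eps (br (dext fg Om fh fa) (Tmap eps x) (Tmap eps y)) z)
           (br (contracted fg Om fh fa) x y z).
Proof.
apply: lim0plus_ext (lim0plus_sum (fun i => lim0plus_sum (fun j =>
  lim0plus_scale (x i * y j) (dext_scaled_limit i j z)))) _ => e _.
rewrite /Tinv /br /Tmap big_distrl; apply: eq_bigr => i _.
by rewrite big_distrl; apply: eq_bigr => j _ /=; ring.
Qed.

Lemma contraction_form_limit (x y : Didx n p q -> R) :
  lim0plus (fun eps => bilin (dmetric Om hf) (Tmap eps x) (Tmap eps y))
           (bilin (contracted_form Om hf) x y).
Proof.
have -> : bilin (contracted_form Om hf) x y
          = \sum_i \sum_j x i * y j * contracted_form Om hf i j.
  by apply: eq_bigr => i _; apply: eq_bigr => j _; ring.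
apply: lim0plus_ext (lim0plus_sum (fun i => lim0plus_sum (fun j =>
  lim0plus_scale (x i * y j) (dmetric_scaled_limit i j)))) _ => e _.
by apply: eq_bigr => i _; apply: eq_bigr => j _; rewrite /Tmap; ring.
Qed.

End Contraction.

Theorem theorem5p1 (R : realFieldType) (n p q : nat)
  (fg : 'I_n -> 'I_n -> 'I_n -> R) (Om : 'I_n -> 'I_n -> R)
  (fh : Hidx p q -> Hidx p q -> Hidx p q -> R)
  (fa : Hidx p q -> 'I_n -> 'I_n -> R) (hf : Hidx p q -> Hidx p q -> R) :
  DE_data fg Om fh fa hf ->
  (forall a b c, fh (inl a) (inl b) (inr c) = 0) ->
  (forall (x y : Didx n p q -> R) (z : Didx n p q),
     lim0plus (fun eps => Tinv eps (br (dext fg Om fh fa) (Tmap eps x) (Tmap eps y)) z)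
              (br (contracted fg Om fh fa) x y z)) /\
  (forall x y : Didx n p q -> R,
     lim0plus (fun eps => bilin (dmetric Om hf) (Tmap eps x) (Tmap eps y))
              (bilin (contracted_form Om hf) x y)) /\
  lie_consts (contracted fg Om fh fa) /\
  invariant_metric (contracted fg Om fh fa) (contracted_form Om hf) /\
  (exists (fa' : 'I_p -> gprime_idx n q -> gprime_idx n q -> R)
          (hf' : 'I_p -> 'I_p -> R)
          (sigma : DEidx (gprime_idx n q) 'I_p -> Didx n p q),
     DE_data (gprime fg) (gprime_metric Om) (hhat fh) fa' hf' /\
     bijective sigma /\
     (forall u v w, contracted fg Om fh fa (sigma u) (sigma v) (sigma w)
                    = dext (gprime fg) (gprime_metric Om) (hhat fh) fa' u v w) /\
     (forall u v, contracted_form Om hf (sigma u) (sigma v)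
                  = dmetric (gprime_metric Om) hf' u v)).
Proof.
move=> HD hat_sub; have [_ [_ [[fhA _] _]]] := HD.
have HD' := hat_DE_data HD hat_sub.
have iso := contraction_iso_bij n p q.
have iso_bracket := contraction_iso_bracket fg Om fa fhA.
have iso_form := @contraction_iso_form R n p q Om hf.
split; first exact: contraction_bracket_limit.
split; first exact: contraction_form_limit.
split; first exact: lie_consts_transport iso iso_bracket (DE_data_lie HD').
split; first exact: (invariant_metric_transport iso iso_bracket iso_form
  (DE_data_invariant_metric HD')).
by exists (hat_action fh fa), (hat_form hf), (@contraction_iso n p q).
Qed.
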